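(* Let $\Lambda^\ast=(\lambda^\ast_{ij})\in\mathbb{R}_+^{n\times m}$ be the true intensity matrix and let $\widehat\Lambda=(\widehat\lambda_{ij})\in\mathbb{R}_+^{n\times m}$ be any intensity matrix estimator satisfying $c_1\bar\lambda_{m,n}\le\widehat\lambda_{ij}\le C_1\bar\lambda_{m,n}$ for all $(i,j)$, where $0<c_1\le C_1<\infty$ and $C_1\bar\lambda_{m,n}\le 1/2$. Define the conditional generation error $$\Delta_{(\boldsymbol\Theta_n,\mathcal{A}_n)}:=\sum_{i=1}^n\sum_{j=1}^m \mathrm{d}_{\mathrm{KL}}\Big(\mathrm{Bern}\big(1-e^{-\lambda^\ast_{ij}}\big)\,\Big\|\,\mathrm{Bern}\big(1-e^{-\widehat\lambda_{ij}}\big)\Big).$$ Then there is a constant $C>0$ depending only on $c_1$ (and $C_1$) such that $$\frac{\Delta_{(\boldsymbol\Theta_n,\mathcal{A}_n)}}{nm}\le C\,\frac{\|\widehat\Lambda-\Lambda^\ast\|_F^2}{nm\,\bar\lambda_{m,n}}.$$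
   Context: $\bar\lambda_{m,n}>0$ is a scale parameter. In the intensity-link hypergraph model, conditionally on latent factors the incidence entries are independent with $b_{ij}\sim\mathrm{Bern}(1-e^{-\lambda_{ij}})$; $\Delta_{(\boldsymbol\Theta_n,\mathcal{A}_n)}$ is the KL divergence between the conditional incidence law under the true intensities $\Lambda^\ast$ and under the estimated intensities $\widehat\Lambda$, which by independence is the sum of the entrywise Bernoulli KL divergences. $\|\cdot\|_F$ is the Frobenius norm. *)

From mathcomp Require Import all_boot all_order all_algebra.
From mathcomp Require Import all_classical all_reals all_analysis.
Set Implicit Arguments. Unset Strict Implicit. Unset Printing Implicit Defensive.
Import Order.TTheory GRing.Theory Num.Theory.
Local Open Scope ring_scope.

Definition xlogxy {R : realType} (x y : R) : R :=
  if x == 0 then 0 else x * ln (x / y).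

Definition bernKL {R : realType} (p q : R) : R :=
  xlogxy p q + xlogxy (1 - p) (1 - q).

Definition link {R : realType} (l : R) : R := 1 - expR (- l).

Definition gen_error {R : realType} {n m : nat} (Lstar Lhat : 'M[R]_(n, m)) : R :=
  \sum_(i < n) \sum_(j < m) bernKL (link (Lstar i j)) (link (Lhat i j)).

Definition frob_norm {R : realType} {n m : nat} (A : 'M[R]_(n, m)) : R :=
  Num.sqrt (\sum_(i < n) \sum_(j < m) (A i j) ^+ 2).

From mathcomp Require Import all_boot all_order all_algebra.
From mathcomp Require Import all_classical all_reals all_analysis.
From mathcomp Require Import ring lra.
Import Order.TTheory GRing.Theory Num.Theory.
Local Open Scope ring_scope.

(* Since ln t <= t - 1, the Bernoulli KL divergence is bounded by the chi-square
   divergence (p - q)^2 / (q (1 - q)).  The link 1 - exp(-l) is 1-Lipschitz on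
   [0, +oo), so entrywise (p - q)^2 <= (Lstar - Lhat)^2, and for Lhat in (0, 1/2]
   the variance q (1 - q) of the estimated Bernoulli is at least Lhat / 4, which is
   at least c1 lbar / 4.  Summing over the entries gives the theorem with
   C = 4 / c1. *)

Section LinkKL.
Context {R : realType}.
Implicit Types a b p q x y : R.

Lemma xlogxy_le x y : 0 <= x -> 0 < y -> xlogxy x y <= x * (x / y - 1).
Proof.
move=> x_ge0 y_gt0; rewrite /xlogxy; case: eqP => [->|/eqP x_neq0].
  by rewrite mul0r.
have x_gt0 : 0 < x by rewrite lt_def x_neq0.
apply: ler_wpM2l => //.
have := @le_ln1Dx R (x / y - 1); rewrite [1 + _]addrC subrK; apply.
have := divr_gt0 x_gt0 y_gt0; lra.
Qed.

Lemma bernKL_le_chi2 p q : 0 <= p < 1 -> 0 < q < 1 ->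
  bernKL p q <= (p - q) ^+ 2 / (q * (1 - q)).
Proof.
move=> /andP[p_ge0 p_lt1] /andP[q_gt0 q_lt1].
have q_neq0 : q != 0 by rewrite gt_eqF.
have q'_neq0 : 1 - q != 0 by rewrite subr_eq0 eq_sym lt_eqF.
have := xlogxy_le p q p_ge0 q_gt0.
have := xlogxy_le (1 - p) (1 - q) ltac:(lra) ltac:(lra).
rewrite /bernKL => le2 le1; apply: le_trans (lerD le1 le2) _.
by rewrite le_eqVlt; apply/orP; left; apply/eqP; field; rewrite q_neq0 q'_neq0.
Qed.

Lemma expRN_sub_le a b : 0 <= a -> a <= b -> 0 <= expR (- a) - expR (- b) <= b - a.
Proof.
move=> a_ge0 ab.
have -> : expR (- a) - expR (- b) = expR (- a) * (1 - expR (- (b - a))).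
  by rewrite mulrBr mulr1 -expRD; congr (_ - expR _); ring.
have := expR_ge1Dx (- (b - a)); have := expR_gt0 (- a).
have : expR (- a) <= 1 by rewrite expR_le1; lra.
have : expR (- (b - a)) <= 1 by rewrite expR_le1; lra.
move=> *; apply/andP; split; nra.
Qed.

Lemma link_dist_le a b : 0 <= a -> 0 <= b -> (link a - link b) ^+ 2 <= (a - b) ^+ 2.
Proof.
move=> a_ge0 b_ge0; rewrite /link.
have -> : 1 - expR (- a) - (1 - expR (- b)) = expR (- b) - expR (- a) by ring.
case: (leP a b) => [ab|/ltW ba].
  by have /andP[] := expRN_sub_le a b a_ge0 ab; nra.
by have /andP[] := expRN_sub_le b a b_ge0 ba; nra.
Qed.

Lemma link_in01 a : 0 <= a -> 0 <= link a < 1.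
Proof.
move=> a_ge0; rewrite /link subr_ge0 expR_le1 oppr_le0 a_ge0 /=.
by rewrite ltrBlDr ltrDl expR_gt0.
Qed.

Lemma link_ge_half b : 0 <= b <= 1 -> b / 2 <= link b.
Proof.
move=> /andP[b_ge0 b_le1]; rewrite /link.
have inv : expR (- b) * expR b = 1 by rewrite -expRD addNr expR0.
have := expR_ge1Dx b; have := expR_gt0 (- b); nra.
Qed.

Lemma link_var_ge b : 0 <= b <= 1 / 2 -> b / 4 <= link b * (1 - link b).
Proof.
move=> /andP[b_ge0 b_le].
have := link_ge_half b ltac:(apply/andP; lra).
have : 1 / 2 <= 1 - link b.
  by rewrite /link opprB addrC subrK; have := expR_ge1Dx (- b); lra.
nra.
Qed.

Lemma bernKL_link_le a b : 0 <= a -> 0 < b <= 1 / 2 ->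
  bernKL (link a) (link b) <= 4 / b * (b - a) ^+ 2.
Proof.
move=> a_ge0 /andP[b_gt0 b_le].
have var_ge := link_var_ge b ltac:(apply/andP; lra).
have lb_ge := link_ge_half b ltac:(apply/andP; lra).
have /andP[_ lb_lt1] := link_in01 b (ltW b_gt0).
have := bernKL_le_chi2 (link a) (link b) (link_in01 a a_ge0).
move=> /(_ ltac:(apply/andP; lra)) /le_trans; apply.
have var_gt0 : 0 < link b * (1 - link b) by lra.
have dist := link_dist_le a b a_ge0 (ltW b_gt0).
rewrite ler_pdivrMr // -mulrA [X in _ <= _ * X]mulrC mulrA.
have -> : (b - a) ^+ 2 = (a - b) ^+ 2 by ring.
have b_var : 1 <= 4 / b * (link b * (1 - link b)).
  have quarter : 4 / b * (b / 4) = 1 by field; rewrite gt_eqF.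
  by rewrite -{1}quarter; apply: ler_wpM2l => //; apply: divr_ge0; lra.
have := sqr_ge0 (a - b); nra.
Qed.

Lemma gen_error_le_frob {n m : nat} (l : R) (Lstar Lhat : 'M[R]_(n, m)) :
  0 < l -> (forall i j, 0 <= Lstar i j) -> (forall i j, l <= Lhat i j <= 1 / 2) ->
  gen_error Lstar Lhat <= 4 / l * frob_norm (Lhat - Lstar) ^+ 2.
Proof.
move=> l_gt0 Lstar_ge0 Lhat_in.
rewrite /frob_norm sqr_sqrtr; last first.
  by apply: sumr_ge0 => i _; apply: sumr_ge0 => j _; apply: sqr_ge0.
rewrite /gen_error mulr_sumr; apply: ler_sum => i _.
rewrite mulr_sumr; apply: ler_sum => j _; rewrite !mxE.
have /andP[l_le l_half] := Lhat_in i j.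
have := bernKL_link_le (Lstar i j) (Lhat i j) (Lstar_ge0 i j).
move=> /(_ ltac:(apply/andP; lra)) /le_trans; apply.
apply: ler_wpM2r; first exact: sqr_ge0.
rewrite ler_pM2l // lef_pV2 ?posrE //; lra.
Qed.

End LinkKL.

Theorem theorem4 (R : realType) (c1 C1 : R) :
  0 < c1 -> c1 <= C1 ->
  exists C : R, 0 < C /\
    forall (n m : nat) (lbar : R) (Lstar Lhat : 'M[R]_(n, m)),
      0 < lbar -> C1 * lbar <= 1 / 2 ->
      (forall i j, 0 <= Lstar i j) ->
      (forall i j, c1 * lbar <= Lhat i j /\ Lhat i j <= C1 * lbar) ->
      gen_error Lstar Lhat / (n * m)%:R
        <= C * ((frob_norm (Lhat - Lstar)) ^+ 2 / ((n * m)%:R * lbar)).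
Proof.
move=> c1_gt0 _; exists (4 / c1); split; first exact: divr_gt0.
move=> n m lbar Lstar Lhat lbar_gt0 C1_half Lstar_ge0 Lhat_in.
have cl_gt0 : 0 < c1 * lbar by exact: mulr_gt0.
have Lhat_range i j : c1 * lbar <= Lhat i j <= 1 / 2.
  by have [lo hi] := Lhat_in i j; rewrite lo (le_trans hi C1_half).
have := gen_error_le_frob (c1 * lbar) Lstar Lhat cl_gt0 Lstar_ge0 Lhat_range.
have -> : 4 / c1 * (frob_norm (Lhat - Lstar) ^+ 2 / ((n * m)%:R * lbar))
        = 4 / (c1 * lbar) * frob_norm (Lhat - Lstar) ^+ 2 / (n * m)%:R.
  by rewrite !invfM; ring.
by apply: ler_wpM2r; rewrite // invr_ge0.
Qed.
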